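(* Let $X$ be a convex subset of a real vector space, $I:X\to\mathbb{R}$ a convex function and $P:X\to]0,+\infty[$ a concave function. Then, for each $\mu>0$, a point $u\in X$ is a global minimum of the function $x\mapsto I(x)-\mu\log P(x)$ on $X$ if and only if $$I(u)\leq I(x)-\mu\left(\frac{P(x)}{P(u)}-1\right)$$ for all $x\in X$. *)

From HB Require Import structures.
From mathcomp Require Import all_boot all_order all_algebra.
From mathcomp Require Import all_classical all_reals.
From mathcomp Require Import exp.
Set Implicit Arguments. Unset Strict Implicit. Unset Printing Implicit Defensive.
Import Order.TTheory GRing.Theory Num.Theory.
Local Open Scope ring_scope.
Local Open Scope classical_set_scope.

Definition convex_subset (R : realType) (V : lmodType R) (X : set V) : Prop :=
  forall x y t, X x -> X y -> 0 <= t -> t <= 1 -> X (t *: x + (1 - t) *: y).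

Definition convex_on (R : realType) (V : lmodType R) (X : set V) (f : V -> R) : Prop :=
  forall x y t, X x -> X y -> 0 <= t -> t <= 1 ->
    f (t *: x + (1 - t) *: y) <= t * f x + (1 - t) * f y.

Definition concave_on (R : realType) (V : lmodType R) (X : set V) (f : V -> R) : Prop :=
  forall x y t, X x -> X y -> 0 <= t -> t <= 1 ->
    t * f x + (1 - t) * f y <= f (t *: x + (1 - t) *: y).

From HB Require Import structures.
From mathcomp Require Import all_boot all_order all_algebra.
From mathcomp Require Import all_classical all_reals.
From mathcomp Require Import exp.
From mathcomp Require Import ring lra.
Import Order.TTheory GRing.Theory Num.Theory.
Local Open Scope ring_scope.
Local Open Scope classical_set_scope.

(* The easy direction is the tangent-line bound [ln y <= y - 1] at
   [y = P x / P u].  Conversely, compare [u] with the points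
   [t x + (1 - t) u] of the segment towards [x]: convexity of [I], concavity
   of [P], monotonicity of [ln] and the same tangent-line bound give
   [(I u - I x) (t P x + (1 - t) P u) <= mu (P u - P x)] for all [t] in
   [(0, 1]].  This is affine in [t], and [t -> 0] yields the claim. *)

Lemma ln_le_subr1 {R : realType} (x : R) : 0 < x -> ln x <= x - 1.
Proof. by move=> x0; have := expR_ge1Dx (ln x); rewrite lnK ?posrE //; lra. Qed.

Lemma lnB_le_div_subr1 {R : realType} {a b : R} :
  0 < a -> 0 < b -> ln b - ln a <= b / a - 1.
Proof.
by move=> a0 b0; rewrite -ln_div ?posrE //; apply/ln_le_subr1/divr_gt0.
Qed.

Lemma le0_of_le_mul_small {R : realFieldType} (c k : R) :
  (forall t, 0 < t <= 1 -> c <= t * k) -> c <= 0.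
Proof.
move=> small; rewrite leNgt; apply/negP => c_gt0.
have d_gt0 : 0 < `|k| + c by rewrite ltr_wpDl.
pose t := c / (`|k| + c).
have t_gt0 : 0 < t by exact: divr_gt0.
have t_le1 : t <= 1 by rewrite ler_pdivrMr // mul1r lerDr.
have tk : t * k <= t * `|k| by apply: ler_wpM2l; [exact: ltW | exact: ler_norm].
have tc : t * (`|k| + c) = c by rewrite mulfVK ?gt_eqF.
have : c <= t * k by apply: small; rewrite t_gt0 t_le1.
nra.
Qed.

Section LogBarrier.
Context {R : realType} {V : lmodType R} {X : set V} {I P : V -> R}.
Hypotheses (hX : convex_subset X) (hI : convex_on X I) (hP : concave_on X P).
Hypothesis hPpos : forall x, X x -> 0 < P x.
Context {mu : R}.
Hypothesis hmu : 0 < mu.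

Lemma barrier_le_convex_comb {x u : V} {t : R} : X x -> X u -> 0 <= t <= 1 ->
  I (t *: x + (1 - t) *: u) - mu * ln (P (t *: x + (1 - t) *: u))
  <= t * I x + (1 - t) * I u - mu * ln (t * P x + (1 - t) * P u).
Proof.
move=> Xx Xu /andP[t_ge0 t_le1].
have Px := hPpos x Xx; have Pu := hPpos u Xu.
have q_gt0 : 0 < t * P x + (1 - t) * P u by nra.
have ln_le : ln (t * P x + (1 - t) * P u) <= ln (P (t *: x + (1 - t) *: u)).
  have Xt := hX x u t Xx Xu t_ge0 t_le1.
  by rewrite ler_ln ?posrE ?hPpos // (hP x u).
have := hI x u t Xx Xu t_ge0 t_le1.
have : mu * ln (t * P x + (1 - t) * P u) <= mu * ln (P (t *: x + (1 - t) *: u)).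
  by rewrite ler_pM2l.
lra.
Qed.

Lemma barrier_min_le_segment {u x : V} {t : R} :
  (forall y, X y -> I u - mu * ln (P u) <= I y - mu * ln (P y)) ->
  X u -> X x -> 0 < t <= 1 ->
  (I u - I x) * (t * P x + (1 - t) * P u) <= mu * (P u - P x).
Proof.
move=> u_min Xu Xx /andP[t_gt0 t_le1].
have Px := hPpos x Xx; have Pu := hPpos u Xu.
set q := t * P x + (1 - t) * P u.
have q_gt0 : 0 < q by rewrite /q; nra.
have t01 : 0 <= t <= 1 by rewrite ltW.
have min_t := u_min _ (hX x u t Xx Xu (ltW t_gt0) t_le1).
have comb := barrier_le_convex_comb Xx Xu t01.
have tangent : mu * (ln (P u) - ln q) <= mu * (P u / q - 1).
  by rewrite ler_pM2l // lnB_le_div_subr1.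
have step : t * (I u - I x) <= mu * (P u / q - 1) by lra.
have ratio : (P u / q - 1) * q = t * (P u - P x).
  by rewrite mulrBl mulfVK ?gt_eqF // /q; ring.
have := ler_wpM2r (ltW q_gt0) step; rewrite -[X in _ <= X]mulrA ratio.
have -> : mu * (t * (P u - P x)) = t * (mu * (P u - P x)) by ring.
by rewrite -mulrA ler_pM2l.
Qed.

End LogBarrier.

Theorem theorem1p6 (R : realType) (V : lmodType R) (X : set V) (I P : V -> R)
  (hX : convex_subset X) (hI : convex_on X I) (hP : concave_on X P)
  (hPpos : forall x, X x -> 0 < P x) (mu : R) (hmu : 0 < mu) (u : V) (hu : X u) :
  (forall x, X x -> I u - mu * ln (P u) <= I x - mu * ln (P x)) <->
  (forall x, X x -> I u <= I x - mu * (P x / P u - 1)).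
Proof.
have Pu := hPpos u hu.
split=> [u_min x Xx | u_var x Xx]; have Px := hPpos x Xx; last first.
  have := u_var x Xx; have := lnB_le_div_subr1 Pu Px.
  by rewrite -(ler_pM2l hmu); lra.
have linear_in_t : (I u - I x) * P u - mu * (P u - P x) <= 0.
  apply: (@le0_of_le_mul_small _ _ ((I u - I x) * (P u - P x))) => t t01.
  have := barrier_min_le_segment hX hI hP hPpos hmu u_min hu Xx t01.
  have -> : (I u - I x) * (t * P x + (1 - t) * P u)
          = (I u - I x) * P u - t * ((I u - I x) * (P u - P x)) by ring.
  lra.
have -> : P x / P u - 1 = (P x - P u) / P u by rewrite mulrBl divff ?gt_eqF.
have -> : mu * ((P x - P u) / P u) = - (mu * (P u - P x) / P u) by ring.
have : I u - I x <= mu * (P u - P x) / P u by rewrite ler_pdivlMr //; lra.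
lra.
Qed.
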